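(* Let $\lambda=(\lambda_1,\ldots,\lambda_n)\in\mathbb{R}_{<0}^n$ have pairwise distinct entries, and let $\lambda_{\neg\max}$ be the $(n-1)$-tuple obtained from $\lambda$ by removing its maximal entry. Then for each $k=1,\ldots,n-1$, $$\lim_{t\to\infty}\frac{\nu_{k-1,\lambda}(t)}{\nu_{k,\lambda}(t)}=\frac{\kappa_{k-1,\lambda_{\neg\max}}}{\kappa_{k,\lambda_{\neg\max}}}.$$
   Context: $V_\lambda$ is the $n\times n$ Vandermonde matrix with $(i,j)$ entry $\lambda_j^{i-1}$, and $[\nu_{0,\lambda}(t),\ldots,\nu_{n-1,\lambda}(t)]=[e^{\lambda_1 t},\ldots,e^{\lambda_n t}]V_\lambda^{-1}$. For a tuple $\mu=(\mu_1,\ldots,\mu_p)$, the companion coefficients $\kappa_{k,\mu}$ ($0\le k\le p$) are defined by $\prod_{j=1}^p(s-\mu_j)=\sum_{k=0}^p\kappa_{k,\mu}s^k$. *)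

From HB Require Import structures.
From mathcomp Require Import all_boot all_order all_algebra.
From mathcomp Require Import all_classical all_reals all_analysis.
Set Implicit Arguments. Unset Strict Implicit. Unset Printing Implicit Defensive.
Import Order.TTheory GRing.Theory Num.Theory.
Local Open Scope ring_scope.

(* V_lambda: the n x n Vandermonde matrix, (i,j) entry lambda_j^(i) (0-based) *)
Definition Vmat (R : realType) (n : nat) (lam : 'rV[R]_n) : 'M[R]_n :=
  Vandermonde n lam.

Definition nu (R : realType) (n : nat) (lam : 'rV[R]_n) (t : R) : 'rV[R]_n :=
  (\row_(j < n) expR (lam 0 j * t)) *m invmx (Vmat lam).

(* prod_{j <> jm} (s - lam_j): the polynomial whose coefficients are
   kappa_{k, lam_{not max}} when jm is the index of the maximal entry *)
Definition kappa_poly (R : realType) (n : nat) (lam : 'rV[R]_n) (jm : 'I_n)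
  : {poly R} := \prod_(j < n | j != jm) ('X - (lam 0 j)%:P).

From HB Require Import structures.
From mathcomp Require Import all_boot all_order all_algebra.
From mathcomp Require Import all_classical all_reals all_analysis.
Set Implicit Arguments. Unset Strict Implicit. Unset Printing Implicit Defensive.
Import Order.TTheory GRing.Theory Num.Theory.
Import numFieldNormedType.Exports.
Local Open Scope classical_set_scope.
Local Open Scope ring_scope.

(* Put W := V_lam^-1, so that nu_i(t) = sum_j e^(lam_j t) W_(j,i).  Since
   lam_jm strictly dominates the other exponents, e^(-lam_jm t) nu_i(t) tends
   to W_(jm,i), and the ratio of the nu's tends to W_(jm,k-1) / W_(jm,k).  Row
   jm of the inverse Vandermonde matrix is the coefficient vector of the
   Lagrange polynomial
     prod_(j <> jm) (X - lam_j) / prod_(j <> jm) (lam_jm - lam_j),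
   hence this quotient is kappa_(k-1) / kappa_k; the denominator does not
   vanish because a polynomial whose roots are all negative has positive
   coefficients up to its degree. *)

Lemma coef_prod_XsubC_ge0 (R : realDomainType) (s : seq R) i :
  {in s, forall x, x < 0} -> 0 <= (\prod_(x <- s) ('X - x%:P))`_i.
Proof.
elim: s i => [[|i]|a r IH i r_neg]; rewrite ?big_nil ?coefC //.
have a_neg : 0 < - a by rewrite oppr_gt0 r_neg ?mem_head.
have {}IH j : 0 <= (\prod_(x <- r) ('X - x%:P))`_j.
  by apply: IH => x xr; rewrite r_neg // in_cons xr orbT.
rewrite big_cons mulrBl coefB coefXM coefCM -mulNr.
have a_IH j : 0 <= - a * (\prod_(x <- r) ('X - x%:P))`_j.
  exact: mulr_ge0 (ltW a_neg) (IH j).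
by case: i => [|i]; rewrite ?add0r ?addr_ge0.
Qed.

Lemma coef_prod_XsubC_gt0 (R : realDomainType) (s : seq R) i :
  {in s, forall x, x < 0} -> (i <= size s)%N ->
  0 < (\prod_(x <- s) ('X - x%:P))`_i.
Proof.
elim: s i => [[|i]|a r IH i r_neg] //=; rewrite ?big_nil ?coefC //.
have a_neg : 0 < - a by rewrite oppr_gt0 r_neg ?mem_head.
have {}r_neg : {in r, forall x, x < 0}.
  by move=> x xr; rewrite r_neg // in_cons xr orbT.
rewrite big_cons mulrBl coefB coefXM coefCM -mulNr.
case: i => [_|i]; first by rewrite add0r mulr_gt0 ?IH.
rewrite ltnS => le_i_r; apply: ltr_wpDr; last exact: IH.
apply: mulr_ge0; [exact: ltW | exact: coef_prod_XsubC_ge0].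
Qed.

Lemma prod_neq_enum (R : comRingType) n (m : 'I_n) (F : 'I_n -> R) :
  \prod_(j < n | j != m) F j = \prod_(j <- enum (predC1 m)) F j.
Proof. by rewrite big_enum. Qed.

Lemma size_prod_XsubC_neq (R : idomainType) n (m : 'I_n) (f : 'I_n -> R) :
  size (\prod_(j < n | j != m) ('X - (f j)%:P)) = n.
Proof.
rewrite prod_neq_enum size_prod_XsubC -cardE cardC1 card_ord prednK //.
exact: leq_ltn_trans (ltn_ord m).
Qed.

Lemma horner_prod_XsubC_neq0 (R : idomainType) n (a : 'rV[R]_n) (m : 'I_n) :
  (forall i j, i != j -> a 0 i != a 0 j) ->
  (\prod_(j < n | j != m) ('X - (a 0 j)%:P)).[a 0 m] != 0.
Proof.
move=> a_inj; rewrite horner_prod; apply/prodf_neq0 => j j_neq_m.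
by rewrite hornerXsubC subr_eq0 a_inj // eq_sym.
Qed.

Lemma Vandermonde_unitmx (F : fieldType) n (a : 'rV[F]_n) :
  (forall i j, i != j -> a 0 i != a 0 j) -> Vandermonde n a \in unitmx.
Proof.
move=> a_inj; rewrite unitmxE unitfE det_Vandermonde.
apply/prodf_neq0 => i _; apply/prodf_neq0 => j lt_ij.
by rewrite subr_eq0 a_inj // neq_ltn lt_ij orbT.
Qed.

Lemma mul_coefs_Vandermonde (R : comRingType) n (a : 'rV[R]_n) (p : {poly R}) :
  (size p <= n)%N -> \row_(i < n) p`_i *m Vandermonde n a = \row_j p.[a 0 j].
Proof.
move=> le_p_n; apply/rowP => j; rewrite !mxE (horner_coef_wide _ le_p_n).
by apply: eq_bigr => i _; rewrite !mxE.
Qed.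

Lemma invmx_Vandermonde_row (F : fieldType) n (a : 'rV[F]_n) (m i : 'I_n) :
  (forall i j, i != j -> a 0 i != a 0 j) ->
  let L := \prod_(j < n | j != m) ('X - (a 0 j)%:P) in
  invmx (Vandermonde n a) m i = L`_i / L.[a 0 m].
Proof.
move=> a_inj L.
have L_root j : j != m -> L.[a 0 j] = 0.
  by move=> jm; rewrite horner_prod (bigD1 j) //= hornerXsubC subrr mul0r.
have Lm_neq0 : L.[a 0 m] != 0 by exact: horner_prod_XsubC_neq0.
pose p := (L.[a 0 m])^-1 *: L.
have p_size : (size p <= n)%N.
  by rewrite (leq_trans (size_scale_leq _ _)) // size_prod_XsubC_neq.
have p_delta : \row_j p.[a 0 j] = delta_mx 0 m.
  apply/rowP => j; rewrite !mxE hornerZ /=.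
  by have [->|jm] := eqVneq j m; rewrite ?mulVf ?(L_root j jm, mulr0).
have := mulmxK (Vandermonde_unitmx a_inj) (\row_(i < n) p`_i).
rewrite mul_coefs_Vandermonde // p_delta -rowE => /rowP/(_ i).
by rewrite !mxE coefZ mulrC.
Qed.

Lemma cvgr_expRM_lt0 (R : realType) (a : R) :
  a < 0 -> expR (a * t) @[t --> +oo] --> 0.
Proof.
move=> a_lt0.
have -> : (fun t => expR (a * t)) = (fun t => expR (- t)) \o *%R (- a).
  by apply: funext => t /=; rewrite mulNr opprK.
apply: (@cvg_comp _ _ _ _ _ _ (pinfty_nbhs R)); last exact: cvgr_expR.
by apply: gt0_cvgMry; rewrite ?oppr_gt0.
Qed.

Lemma cvg_nu_scaled (R : realType) n (lam : 'rV[R]_n) (m i : 'I_n) :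
  (forall j, j != m -> lam 0 j < lam 0 m) ->
  nu lam t 0 i * expR (- (lam 0 m * t)) @[t --> +oo] -->
    invmx (Vmat lam) m i.
Proof.
move=> m_max; set W := invmx (Vmat lam).
have nuE t : nu lam t 0 i * expR (- (lam 0 m * t)) =
    \sum_j expR ((lam 0 j - lam 0 m) * t) * W j i.
  rewrite /nu !mxE mulr_suml; apply: eq_bigr => j _.
  by rewrite mxE mulrAC -expRD mulrBl.
have -> : W m i = \sum_j (j == m)%:R * W j i.
  rewrite (bigD1 m) //= eqxx mul1r big1 ?addr0 // => j /negbTE->.
  by rewrite mul0r.
under eq_cvg do rewrite nuE.
apply: cvg_big => [|j _]; first exact: add_continuous.
apply: cvgMr_tmp; have [->|jm] := eqVneq j m.
  by under eq_cvg do rewrite subrr mul0r expR0; exact: cvg_cst.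
by apply: cvgr_expRM_lt0; rewrite subr_lt0 m_max.
Qed.

Lemma coef_kappa_poly_gt0 (R : realType) n (lam : 'rV[R]_n) (m : 'I_n) i :
  (forall j, lam 0 j < 0) -> (i < n)%N -> 0 < (kappa_poly lam m)`_i.
Proof.
move=> lam_neg lt_i_n; rewrite /kappa_poly prod_neq_enum.
rewrite -(big_map (lam 0) xpredT (fun x => 'X - x%:P)).
apply: coef_prod_XsubC_gt0; first by move=> _ /mapP[j _ ->].
rewrite size_map -cardE cardC1 card_ord -ltnS prednK //.
exact: leq_ltn_trans lt_i_n.
Qed.

Lemma divMMr (F : fieldType) (c x y : F) : c != 0 -> (x * c) / (y * c) = x / y.
Proof. by move=> c_neq0; rewrite invfM mulrACA mulfV ?mulr1. Qed.

Theorem proposition8 (R : realType) (n : nat) (lam : 'rV[R]_n)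
  (hneg : forall j, lam 0 j < 0)
  (hdist : forall i j, i != j -> lam 0 i != lam 0 j)
  (jm : 'I_n) (hmax : forall j, lam 0 j <= lam 0 jm)
  (k k' : 'I_n) (hk : val k = (val k').+1) :
  (fun t : R => nu lam t 0 k' / nu lam t 0 k) @ +oo -->
    (kappa_poly lam jm)`_k' / (kappa_poly lam jm)`_k.
Proof.
set kp := kappa_poly lam jm; set W := invmx (Vmat lam).
have jm_max j : j != jm -> lam 0 j < lam 0 jm.
  by move=> j_neq_jm; rewrite lt_neqAle hdist ?hmax.
have W_jm i : W jm i = kp`_i * (kp.[lam 0 jm])^-1.
  exact: invmx_Vandermonde_row jm i hdist.
have kp_neq0 : kp.[lam 0 jm] != 0 by exact: horner_prod_XsubC_neq0 jm hdist.
have W_jmk_neq0 : W jm k != 0.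
  by rewrite W_jm mulf_neq0 ?invr_eq0 // gt_eqF // coef_kappa_poly_gt0.
rewrite -(divMMr _ _ (invr_neq0 kp_neq0)) -!W_jm.
have -> : (fun t => nu lam t 0 k' / nu lam t 0 k) = fun t =>
    nu lam t 0 k' * expR (- (lam 0 jm * t)) /
    (nu lam t 0 k * expR (- (lam 0 jm * t))).
  by apply: funext => t; rewrite divMMr // lt0r_neq0 ?expR_gt0.
apply: cvgM; first exact: cvg_nu_scaled k' jm_max.
by apply: cvgV; last exact: cvg_nu_scaled k jm_max.
Qed.
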